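(* Let $R>0$ and $p>0$. Let $\mathcal G$ be a hypergraph, $U$ a set, and $\pi:V(\mathcal G)\to U$ a function with $|\pi(E)|=|E|$ for every $E\in\mathcal G$. Then for every $\vartheta:\pi(\mathcal G)\to\mathbb R_{\ge0}$, $$\Lambda_p(\vartheta\mathbin{\hat\circ}\pi)\le\Lambda_p(\vartheta).$$
   Context: A hypergraph is identified with its edge set; $\pi(\mathcal G)=\{\pi(E):E\in\mathcal G\}$ with vertex set $\pi(V(\mathcal G))$. For a measure $\nu$ on a hypergraph $\mathcal K$: $d_\nu(L)=\sum_{E\in\mathcal K,L\subset E}\nu(E)$ and $\Lambda_p(\nu)=\sum_{L\subset V(\mathcal K),|L|\ge2}d_\nu(L)^2p^{-|L|}$. The pullback $\vartheta\mathbin{\hat\circ}\pi:\mathcal G\to\mathbb R_{\ge0}$ is $\vartheta\mathbin{\hat\circ}\pi(E)=\vartheta(\pi(E))/|\{E_0\in\mathcal G:\pi(E_0)=\pi(E)\}|$. *)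

From HB Require Import structures.
From mathcomp Require Import all_boot all_order all_algebra.
Set Implicit Arguments. Unset Strict Implicit. Unset Printing Implicit Defensive.
Import Order.TTheory GRing.Theory Num.Theory.
Local Open Scope ring_scope.

(* A hypergraph on a finite vertex type T: a vertex set VK : {set T} together
   with an edge set K : {set {set T}} (edges are subsets of VK).
   A measure on K is a function nu : {set T} -> R (only values on K matter). *)

Definition hdeg (R : realFieldType) (T : finType) (K : {set {set T}})
  (nu : {set T} -> R) (L : {set T}) : R :=
  \sum_(E in K | L \subset E) nu E.

Definition Lambda (R : realFieldType) (T : finType) (p : R) (VK : {set T})
  (K : {set {set T}}) (nu : {set T} -> R) : R :=
  \sum_(L : {set T} | (L \subset VK) && (2 <= #|L|)%N) (hdeg K nu L) ^+ 2 * p ^- #|L|.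

Definition himage (V U : finType) (pi : V -> U) (G : {set {set V}}) : {set {set U}} :=
  [set pi @: E | E : {set V} in G].

Definition pullback (R : realFieldType) (V U : finType) (G : {set {set V}})
  (pi : V -> U) (theta : {set U} -> R) (E : {set V}) : R :=
  theta (pi @: E) / (#|[set E0 in G | pi @: E0 == pi @: E]|)%:R.

From HB Require Import structures.
From mathcomp Require Import all_boot all_order all_algebra.
From mathcomp Require Import lra.
Set Implicit Arguments.
Unset Strict Implicit.
Unset Printing Implicit Defensive.
Import Order.TTheory GRing.Theory Num.Theory.
Local Open Scope ring_scope.

(* Only sets L contained in an edge have nonzero degree, and pi maps these
   injectively.  Grouping them by M = pi(L), the degrees d(L) of the pullback
   over the fibre of M sum to d_theta(M): every edge E with M ⊆ pi(E) contains
   exactly one such L, namely E ∩ pi^-1(M), and the weights of the edges over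
   a given F add up to theta(F).  Since the d(L) are nonnegative, the sum of
   their squares is at most d_theta(M)^2, while p^-|L| = p^-|M|. *)

Lemma sum_sqr_le_sqr_sum (R : realDomainType) (I : Type) (r : seq I)
    (P : pred I) (F : I -> R) :
  (forall i, P i -> 0 <= F i) ->
  \sum_(i <- r | P i) F i ^+ 2 <= (\sum_(i <- r | P i) F i) ^+ 2.
Proof.
move=> F_ge0.
suff [] : 0 <= \sum_(i <- r | P i) F i /\
  \sum_(i <- r | P i) F i ^+ 2 <= (\sum_(i <- r | P i) F i) ^+ 2 by [].
apply: (big_rec2 (fun x y => 0 <= y /\ x <= y ^+ 2)); first by rewrite expr0n.
move=> i x y /F_ge0 Fi_ge0 [y_ge0 le_xy]; split; first exact: addr_ge0.
have : 0 <= F i * y *+ 2 by rewrite mulrn_wge0 // mulr_ge0.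
by rewrite sqrrD; lra.
Qed.

Lemma imset_eq_subset (T T' : finType) (f : T -> T') (E L : {set T})
    (M : {set T'}) :
  {in E &, injective f} -> L \subset E ->
  (f @: L == M) = (L == E :&: f @^-1: M) && (M \subset f @: E).
Proof.
move=> f_inj sLE; apply/eqP/andP => [<- | [/eqP -> sMfE]].
  split; last exact: imsetS.
  apply/eqP/setP => x; rewrite !inE; apply/idP/andP => [xL | [xE /imsetP[y yL]]].
    by rewrite (subsetP sLE) ?imset_f.
  by move/f_inj => -> //; apply: (subsetP sLE).
apply/setP => u; apply/imsetP/idP => [[x] | uM].
  by rewrite !inE => /andP[_ fxM] ->.
have /imsetP[x xE ux] := subsetP sMfE u uM.
by exists x; rewrite // !inE xE -ux.
Qed.

Section Hypergraph.

Variables (R : realFieldType) (T : finType) (K : {set {set T}}).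

Definition covered (L : {set T}) : bool := [exists E in K, L \subset E].

Lemma hdeg_ge0 (nu : {set T} -> R) L :
  (forall E, E \in K -> 0 <= nu E) -> 0 <= hdeg K nu L.
Proof. by move=> nu_ge0; apply: sumr_ge0 => E /andP[/nu_ge0]. Qed.

Lemma hdeg_uncovered (nu : {set T} -> R) L : ~~ covered L -> hdeg K nu L = 0.
Proof.
move=> /existsPn uncov; apply: big1 => E /andP[EK sLE].
by have := uncov E; rewrite EK sLE.
Qed.

Lemma covered_subset (VK L : {set T}) :
  (forall E, E \in K -> E \subset VK) -> covered L -> L \subset VK.
Proof. by move=> sKV /existsP[E /andP[/sKV sEV sLE]]; apply: subset_trans sEV. Qed.

Lemma Lambda_covered (p : R) (VK : {set T}) (nu : {set T} -> R) :
  (forall E, E \in K -> E \subset VK) ->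
  Lambda p VK K nu =
  \sum_(L | covered L && (1 < #|L|)%N) hdeg K nu L ^+ 2 * p ^- #|L|.
Proof.
move=> sKV; rewrite /Lambda [LHS]big_mkcond [RHS]big_mkcond; apply: eq_bigr => L _.
have [covL | uncov] := boolP (covered L); first by rewrite covered_subset.
by rewrite hdeg_uncovered // expr0n mul0r !if_same.
Qed.

End Hypergraph.

Section Pullback.

Variables (R : realFieldType) (V U : finType) (G : {set {set V}}).
Variables (pi : V -> U) (theta : {set U} -> R).

Lemma pullback_fibre_sum F :
  F \in himage pi G -> \sum_(E in G | pi @: E == F) pullback G pi theta E = theta F.
Proof.
case/imsetP=> E0 E0G ->.
rewrite (eq_bigr (fun=> theta (pi @: E0) / #|[set E in G | pi @: E == pi @: E0]|%:R));
  last by move=> E /andP[_ /eqP fE]; rewrite /pullback fE.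
rewrite (eq_bigl (fun E => E \in [set E in G | pi @: E == pi @: E0]));
  last by move=> E; rewrite inE.
rewrite sumr_const -(mulr_natr (theta _ / _)) divfK // pnatr_eq0 -lt0n; apply/card_gt0P.
by exists E0; rewrite inE E0G eqxx.
Qed.

Lemma hdeg_himage M :
  hdeg (himage pi G) theta M =
  \sum_(E in G | M \subset pi @: E) pullback G pi theta E.
Proof.
rewrite /hdeg [RHS](partition_big
  (P := fun E => (E \in G) && (M \subset pi @: E)) (fun E => pi @: E)
  (fun F => (F \in himage pi G) && (M \subset F))) /=; last first.
  by move=> E /andP[EG sMfE]; rewrite sMfE andbT; apply: imset_f.
apply: eq_bigr => F /andP[FG sMF]; rewrite -pullback_fibre_sum //.
apply: eq_bigl => E; case: eqP => [-> | _]; last by rewrite !andbF.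
by rewrite sMF !andbT.
Qed.

Hypothesis pi_inj : forall E, E \in G -> {in E &, injective pi}.

Lemma card_imset_covered L : covered G L -> #|pi @: L| = #|L|.
Proof.
case/existsP=> E /andP[EG /subsetP sLE]; apply: card_in_imset.
exact: (sub_in2 sLE (pi_inj EG)).
Qed.

Lemma sum_hdeg_fibre (nu : {set V} -> R) (M : {set U}) :
  \sum_(L : {set V} | pi @: L == M) hdeg G nu L = \sum_(E in G | M \subset pi @: E) nu E.
Proof.
rewrite /hdeg (exchange_big_dep (fun E => E \in G)) /=; last by move=> L E _ /andP[].
rewrite big_mkcondr; apply: eq_bigr => E EG.
rewrite (eq_bigl (fun L => (L == E :&: pi @^-1: M) && (M \subset pi @: E)));
  last first.
  move=> L; rewrite EG /=; have [sLE | nsLE] := boolP (L \subset E).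
    by rewrite andbT (imset_eq_subset _ (pi_inj EG) sLE).
  by rewrite andbF; case: eqP nsLE => // ->; rewrite subsetIl.
case: (M \subset pi @: E); last by rewrite big_pred0 // => L; rewrite andbF.
by rewrite (big_pred1 (E :&: pi @^-1: M)) // => L; rewrite andbT.
Qed.

Lemma sum_hdeg_pullback_fibre (M : {set U}) :
  \sum_(L : {set V} | pi @: L == M) hdeg G (pullback G pi theta) L =
  hdeg (himage pi G) theta M.
Proof. by rewrite sum_hdeg_fibre hdeg_himage. Qed.

Lemma sum_hdeg_pullback_covered_fibre (M : {set U}) : (1 < #|M|)%N ->
  \sum_(L | covered G L && (1 < #|L|)%N && (pi @: L == M))
    hdeg G (pullback G pi theta) L = hdeg (himage pi G) theta M.
Proof.
move=> M_gt1; rewrite -sum_hdeg_pullback_fibre [RHS](bigID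
  (fun L => covered G L && (1 < #|L|)%N)) /= [X in _ + X]big1 ?addr0.
  by apply: eq_bigl => L; rewrite andbC.
move=> L /andP[/eqP fLM]; have [covL | /hdeg_uncovered //] := boolP (covered G L).
by rewrite -(card_imset_covered covL) fLM M_gt1.
Qed.

End Pullback.

Theorem lemmaC2 (R : realFieldType) (Rad p : R) (hRad : 0 < Rad) (hp : 0 < p)
  (V U : finType) (VG : {set V}) (G : {set {set V}})
  (hG : forall E, E \in G -> E \subset VG)
  (pi : V -> U)
  (hinj : forall E, E \in G -> #|pi @: E| = #|E|)
  (theta : {set U} -> R)
  (htheta : forall F, F \in himage pi G -> 0 <= theta F) :
  Lambda p VG G (pullback G pi theta) <= Lambda p (pi @: VG) (himage pi G) theta.
Proof.
have pi_inj E : E \in G -> {in E &, injective pi}.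
  by move=> EG; apply/imset_injP; rewrite hinj.
set nu := pullback G pi theta.
have nu_ge0 E : E \in G -> 0 <= nu E.
  by move=> EG; rewrite divr_ge0 ?ler0n ?htheta ?imset_f.
rewrite Lambda_covered // /Lambda (partition_big
  (P := fun L => covered G L && (1 < #|L|)%N) (fun L => pi @: L)
  (fun M => (M \subset pi @: VG) && (1 < #|M|)%N)) /=; last first.
  move=> L /andP[covL]; rewrite (card_imset_covered pi_inj covL) => ->.
  by rewrite imsetS ?(covered_subset hG).
apply: ler_sum => M /andP[_ M_gt1].
rewrite (eq_bigr (fun L => hdeg G nu L ^+ 2 * p ^- #|M|)); last first.
  by move=> L /andP[/andP[covL _] /eqP <-]; rewrite (card_imset_covered pi_inj).
have pM_ge0 : 0 <= p ^- #|M| by rewrite invr_ge0 exprn_ge0 // ltW.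
rewrite -mulr_suml ler_wpM2r //.
rewrite -(sum_hdeg_pullback_covered_fibre theta pi_inj M_gt1).
exact: sum_sqr_le_sqr_sum (fun L _ => hdeg_ge0 L nu_ge0).
Qed.
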